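(* Let $\mathcal G$ be a topological $2$-group, $X$ a topological space, $c$ a $\mathcal G$-valued Čech cocycle subordinate to an open cover $\mathcal U=\{U_i\}_{i\in I}$ of $X$, and $\mathcal V=\{V_a\}_{a\in A}$ a refinement of $\mathcal U$. Let $c_{|\mathcal V}$ be the $\mathcal G$-valued Čech cocycle subordinate to $\mathcal V$ induced by restriction of $c$ (along a refinement map). Then there is a $\mathcal G$-bundle morphism $\pi_{c_{|\mathcal V}}\to\pi_c$.
   Context: Topological $2$-group $\mathcal G=(\mathcal G_1\rightrightarrows\mathcal G_0)$, $\mathcal E=\mathrm{Ker}(s)$, ${}^xe=1_xe1_{x^{-1}}$. A $\mathcal G$-valued Čech cocycle subordinate to $\mathcal U$ is $c=(\mathbf x,\mathbf e)$ with continuous $\mathbf x_{ij}\colon U_i\cap U_j\to\mathcal G_0$, $\mathbf e_{ijk}\colon U_i\cap U_j\cap U_k\to\mathcal E$ satisfying $t(\mathbf e_{ijk})\mathbf x_{ij}\mathbf x_{jk}=\mathbf x_{ik}$ and $\mathbf e_{ikl}\mathbf e_{ijk}=\mathbf e_{ijl}\,{}^{\mathbf x_{ij}}\mathbf e_{jkl}$. Given a refinement map $\alpha\colon A\to I$ ($V_a\subset U_{\alpha(a)}$), the restriction $c_{|\mathcal V}=(\mathbf x',\mathbf e')$ is $\mathbf x'_{ab}=\mathbf x_{\alpha(a)\alpha(b)}|_{V_a\cap V_b}$, $\mathbf e'_{abc}=\mathbf e_{\alpha(a)\alpha(b)\alpha(c)}|_{V_a\cap V_b\cap V_c}$. For a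 cocycle $c$, $\pi_c\colon P_c\to\overline X$ is the principal $\mathcal G$-bundle with $P_0=\coprod_iU_i\times\mathcal G_0$, $P_1=\coprod_{i,j}(U_i\cap U_j)\times\mathcal G_1$, $s((v,g)_{ij})=(v,s(g))_i$, $t((v,g)_{ij})=(v,\mathbf x_{ij}(v)^{-1}t(g))_j$, $(v,g)_{ij}*(v,h)_{jk}=(v,\mathbf e_{ijk}(v)(g*(1_{\mathbf x_{ij}(v)}h)))_{ik}$ (where $g*h=h1_{t(g)^{-1}}g$ in $\mathcal G$), right $\mathcal G$-action by right multiplication, and $\pi_c$ the projection to $X$. A $\mathcal G$-bundle morphism $\pi\to\pi'$ over $X$ is a $\mathcal G$-equivariant continuous functor $f$ with $\pi'f=\pi$. *)

From HB Require Import structures.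
From mathcomp Require Import all_boot all_classical topology.
Set Implicit Arguments. Unset Strict Implicit. Unset Printing Implicit Defensive.
Local Open Scope classical_set_scope.

(* A (strict) topological 2-group: a groupoid object in topological groups.
   G0 = objects, G1 = arrows, both topological groups; src/tgt/idm are
   continuous group homomorphisms; comp g h is the composite "g then h",
   defined when tgt g = src h, continuous on composable pairs and a group
   homomorphism (interchange law). *)
Record top2group : Type := Top2Group {
  G0 : topologicalType;
  G1 : topologicalType;
  mul0 : G0 -> G0 -> G0; one0 : G0; inv0 : G0 -> G0;
  mul1 : G1 -> G1 -> G1; one1 : G1; inv1 : G1 -> G1;
  src : G1 -> G0; tgt : G1 -> G0; idm : G0 -> G1;
  comp : G1 -> G1 -> G1;
  mul0A : forall a b c, mul0 a (mul0 b c) = mul0 (mul0 a b) c;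
  mul01 : forall a, mul0 one0 a = a;
  mul0_1 : forall a, mul0 a one0 = a;
  mul0V : forall a, mul0 (inv0 a) a = one0;
  mul0_V : forall a, mul0 a (inv0 a) = one0;
  mul1A : forall a b c, mul1 a (mul1 b c) = mul1 (mul1 a b) c;
  mul11 : forall a, mul1 one1 a = a;
  mul1_1 : forall a, mul1 a one1 = a;
  mul1V : forall a, mul1 (inv1 a) a = one1;
  mul1_V : forall a, mul1 a (inv1 a) = one1;
  mul0_cont : continuous (fun p : G0 * G0 => mul0 p.1 p.2);
  inv0_cont : continuous inv0;
  mul1_cont : continuous (fun p : G1 * G1 => mul1 p.1 p.2);
  inv1_cont : continuous inv1;
  src_mul : forall g h, src (mul1 g h) = mul0 (src g) (src h);
  tgt_mul : forall g h, tgt (mul1 g h) = mul0 (tgt g) (tgt h);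
  idm_mul : forall a b, idm (mul0 a b) = mul1 (idm a) (idm b);
  src_cont : continuous src;
  tgt_cont : continuous tgt;
  idm_cont : continuous idm;
  src_idm : forall a, src (idm a) = a;
  tgt_idm : forall a, tgt (idm a) = a;
  src_comp : forall g h, tgt g = src h -> src (comp g h) = src g;
  tgt_comp : forall g h, tgt g = src h -> tgt (comp g h) = tgt h;
  compA : forall g h k, tgt g = src h -> tgt h = src k ->
    comp g (comp h k) = comp (comp g h) k;
  comp_idl : forall g, comp (idm (src g)) g = g;
  comp_idr : forall g, comp g (idm (tgt g)) = g;
  comp_inv : forall g, exists g', tgt g = src g' /\
    comp g g' = idm (src g) /\ comp g' g = idm (tgt g);
  comp_cont : {within [set p : G1 * G1 | tgt p.1 = src p.2],
                continuous (fun p : G1 * G1 => comp p.1 p.2)};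
  comp_mul : forall g h g' h', tgt g = src h -> tgt g' = src h' ->
    comp (mul1 g g') (mul1 h h') = mul1 (comp g h) (comp g' h')
}.

Arguments mul0 {_}. Arguments one0 {_}. Arguments inv0 {_}.
Arguments mul1 {_}. Arguments one1 {_}. Arguments inv1 {_}.
Arguments src {_}. Arguments tgt {_}. Arguments idm {_}. Arguments comp {_}.

Definition open_cover (X : topologicalType) (I : Type) (U : I -> set X) : Prop :=
  (forall i, open (U i)) /\ (forall v, exists i, U i v).

Definition lconj (G : top2group) (a : G0 G) (g : G1 G) : G1 G :=
  mul1 (mul1 (idm a) g) (idm (inv0 a)).

(* G-valued Cech cocycle c = (x, e) subordinate to U.  The maps are given as
   total functions on X; only their restrictions to the intersections matter. *)
Definition cech_cocycle (G : top2group) (X : topologicalType) (I : Type)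
    (U : I -> set X) (x : I -> I -> X -> G0 G) (e : I -> I -> I -> X -> G1 G)
    : Prop :=
  (forall i j, {within U i `&` U j, continuous (x i j)}) /\
  (forall i j k, {within U i `&` U j `&` U k, continuous (e i j k)}) /\
  (forall i j k v, (U i `&` U j `&` U k) v -> src (e i j k v) = one0) /\
  (forall i j k v, (U i `&` U j `&` U k) v ->
     mul0 (mul0 (tgt (e i j k v)) (x i j v)) (x j k v) = x i k v) /\
  (forall i j k l v, (U i `&` U j `&` U k `&` U l) v ->
     mul1 (e i k l v) (e i j k v) = mul1 (e i j l v) (lconj (x i j v) (e j k l v))).

Definition restr_x (G : top2group) (X : Type) (I A : Type) (alpha : A -> I)
  (x : I -> I -> X -> G0 G) : A -> A -> X -> G0 G :=
  fun a b => x (alpha a) (alpha b).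
Definition restr_e (G : top2group) (X : Type) (I A : Type) (alpha : A -> I)
  (e : I -> I -> I -> X -> G1 G) : A -> A -> A -> X -> G1 G :=
  fun a b c => e (alpha a) (alpha b) (alpha c).

(* P_0 = coprod_i U_i x G0 is realised as the subspace
   {((i, v), g) | v in U_i} of (discrete I) x X x G0, and
   P_1 = coprod_{i,j} (U_i cap U_j) x G1 as the subspace
   {(((i, j), v), g) | v in U_i cap U_j} of (discrete I) x (discrete I) x X x G1. *)
Definition Pobj (G : top2group) (X : topologicalType) (I : choiceType) : topologicalType :=
  (discrete_topology I * X * G0 G)%type.
Definition Parr (G : top2group) (X : topologicalType) (I : choiceType) : topologicalType :=
  (discrete_topology I * discrete_topology I * X * G1 G)%type.

Definition P0set (G : top2group) (X : topologicalType) (I : choiceType)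
  (U : I -> set X) : set (Pobj G X I) := fun p => U p.1.1 p.1.2.
Definition P1set (G : top2group) (X : topologicalType) (I : choiceType)
  (U : I -> set X) : set (Parr G X I) :=
  fun p => U p.1.1.1 p.1.2 /\ U p.1.1.2 p.1.2.

Definition Psrc (G : top2group) (X : topologicalType) (I : choiceType)
  (p : Parr G X I) : Pobj G X I := ((p.1.1.1, p.1.2), src p.2).
Definition Ptgt (G : top2group) (X : topologicalType) (I : choiceType)
  (x : I -> I -> X -> G0 G) (p : Parr G X I) : Pobj G X I :=
  ((p.1.1.2, p.1.2), mul0 (inv0 (x p.1.1.1 p.1.1.2 p.1.2)) (tgt p.2)).
Definition Pcomp (G : top2group) (X : topologicalType) (I : choiceType)
  (x : I -> I -> X -> G0 G) (e : I -> I -> I -> X -> G1 G)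
  (p q : Parr G X I) : Parr G X I :=
  let i := p.1.1.1 in let j := p.1.1.2 in let k := q.1.1.2 in let v := p.1.2 in
  (((i, k), v), mul1 (e i j k v) (comp p.2 (mul1 (idm (x i j v)) q.2))).
Definition Pact0 (G : top2group) (X : topologicalType) (I : choiceType)
  (p : Pobj G X I) (a : G0 G) : Pobj G X I := (p.1, mul0 p.2 a).
Definition Pact1 (G : top2group) (X : topologicalType) (I : choiceType)
  (p : Parr G X I) (g : G1 G) : Parr G X I := (p.1, mul1 p.2 g).
Definition Pproj0 (G : top2group) (X : topologicalType) (I : choiceType)
  (p : Pobj G X I) : X := p.1.2.
Definition Pproj1 (G : top2group) (X : topologicalType) (I : choiceType)
  (p : Parr G X I) : X := p.1.2.

(* A G-bundle morphism pi_{c'} -> pi_c over X, where c' = (x', e') is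
   subordinate to V and c = (x, e) to U: a continuous functor (f0 on objects,
   f1 on arrows; maps between subspaces given as ambient maps sending the
   domain subspace into the target subspace, continuous on the domain),
   G-equivariant, and commuting with the projections to X. *)
Definition bundle_morphism (G : top2group) (X : topologicalType) (I A : choiceType)
  (U : I -> set X) (x : I -> I -> X -> G0 G) (e : I -> I -> I -> X -> G1 G)
  (V : A -> set X) (x' : A -> A -> X -> G0 G) (e' : A -> A -> A -> X -> G1 G)
  (f0 : Pobj G X A -> Pobj G X I) (f1 : Parr G X A -> Parr G X I) : Prop :=
  (forall p, P0set V p -> P0set U (f0 p)) /\
  (forall q, P1set V q -> P1set U (f1 q)) /\
  {within P0set V, continuous f0} /\
  {within P1set V, continuous f1} /\
  (forall q, P1set V q -> f0 (Psrc q) = Psrc (f1 q)) /\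
  (forall q, P1set V q -> f0 (Ptgt x' q) = Ptgt x (f1 q)) /\
  (forall q r, P1set V q -> P1set V r -> Ptgt x' q = Psrc r ->
     f1 (Pcomp x' e' q r) = Pcomp x e (f1 q) (f1 r)) /\
  (forall p a, P0set V p -> f0 (Pact0 p a) = Pact0 (f0 p) a) /\
  (forall q g, P1set V q -> f1 (Pact1 q g) = Pact1 (f1 q) g) /\
  (forall p, P0set V p -> Pproj0 (f0 p) = Pproj0 p) /\
  (forall q, P1set V q -> Pproj1 (f1 q) = Pproj1 q).

From HB Require Import structures.
From mathcomp Require Import all_boot all_classical topology.
Local Open Scope classical_set_scope.

(* The morphism relabels the chart index along the refinement map,
   (v, g)_a |-> (v, g)_alpha(a) on objects and (v, g)_ab |-> (v, g)_alpha(a)alpha(b)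
   on arrows.  It is continuous because the index sets carry the discrete
   topology, and it commutes on the nose with source, target, composition,
   action and projection because c_|V is c precomposed with alpha.  In
   particular no cocycle identity is needed. *)

Lemma discrete_continuous {T : discreteTopologicalType} {U : topologicalType}
    (f : T -> U) : continuous f.
Proof.
move=> t W /= /nbhs_singleton Wft.
by apply: filterS (discrete_set1 t) => _ ->.
Qed.

Lemma continuous_prod_map {T1 T1' T2 T2' : topologicalType}
    (f : T1 -> T1') (g : T2 -> T2') :
  continuous f -> continuous g -> continuous (fun p : T1 * T2 => (f p.1, g p.2)).
Proof.
move=> cf cg p; apply: cvg_pair.
- exact: continuous_comp (@cvg_fst _ _ _ _ _) (cf _).
- exact: continuous_comp (@cvg_snd _ _ _ _ _) (cg _).
Qed.

Section Reindexing.

Variables (G : top2group) (X : topologicalType) (I A : choiceType).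
Variable alpha : A -> I.

Let alphaD : discrete_topology A -> discrete_topology I := alpha.

Definition reindex_obj (p : Pobj G X A) : Pobj G X I :=
  ((alphaD p.1.1, p.1.2), p.2).

Definition reindex_arr (q : Parr G X A) : Parr G X I :=
  (((alphaD q.1.1.1, alphaD q.1.1.2), q.1.2), q.2).

Lemma reindex_obj_continuous : continuous reindex_obj.
Proof.
have alpha_cont : continuous alphaD by exact: discrete_continuous.
apply: (continuous_prod_map
  (fun i_v : discrete_topology A * X => (alphaD i_v.1, i_v.2)) id).
- exact: (continuous_prod_map _ _ alpha_cont (fun _ => cvg_id)).
- exact: (fun _ => cvg_id).
Qed.

Lemma reindex_arr_continuous : continuous reindex_arr.
Proof.
have alpha_cont : continuous alphaD by exact: discrete_continuous.
apply: (continuous_prod_map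
  (fun ij_v : discrete_topology A * discrete_topology A * X =>
    ((alphaD ij_v.1.1, alphaD ij_v.1.2), ij_v.2)) id).
- apply: (continuous_prod_map
    (fun ij : discrete_topology A * discrete_topology A =>
      (alphaD ij.1, alphaD ij.2)) id).
  + exact: (continuous_prod_map _ _ alpha_cont alpha_cont).
  + exact: (fun _ => cvg_id).
- exact: (fun _ => cvg_id).
Qed.

Lemma reindex_src q : Psrc (reindex_arr q) = reindex_obj (Psrc q).
Proof. by []. Qed.

Lemma reindex_tgt (x : I -> I -> X -> G0 G) q :
  Ptgt x (reindex_arr q) = reindex_obj (Ptgt (restr_x alpha x) q).
Proof. by []. Qed.

Lemma reindex_comp (x : I -> I -> X -> G0 G) (e : I -> I -> I -> X -> G1 G) q r :
  reindex_arr (Pcomp (restr_x alpha x) (restr_e alpha e) q r)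
  = Pcomp x e (reindex_arr q) (reindex_arr r).
Proof. by []. Qed.

Variables (U : I -> set X) (V : A -> set X).
Hypothesis V_sub_U : forall a, V a `<=` U (alpha a).

Lemma reindex_obj_P0set p : P0set V p -> P0set U (reindex_obj p).
Proof. exact: V_sub_U. Qed.

Lemma reindex_arr_P1set q : P1set V q -> P1set U (reindex_arr q).
Proof. by case=> /V_sub_U Ui /V_sub_U Uj. Qed.

End Reindexing.

Arguments reindex_obj {G X I A} alpha p.
Arguments reindex_arr {G X I A} alpha q.

Theorem lemma7 (G : top2group) (X : topologicalType) (I A : choiceType)
  (U : I -> set X) (V : A -> set X)
  (x : I -> I -> X -> G0 G) (e : I -> I -> I -> X -> G1 G)
  (alpha : A -> I) :
  open_cover U -> cech_cocycle U x e ->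
  open_cover V -> (forall a, V a `<=` U (alpha a)) ->
  exists (f0 : Pobj G X A -> Pobj G X I) (f1 : Parr G X A -> Parr G X I),
    bundle_morphism U x e V (restr_x alpha x) (restr_e alpha e) f0 f1.
Proof.
move=> _ _ _ V_sub_U.
exists (reindex_obj alpha), (reindex_arr alpha).
split; first exact: reindex_obj_P0set.
split; first exact: reindex_arr_P1set.
split; first exact/continuous_subspaceT/reindex_obj_continuous.
split; first exact/continuous_subspaceT/reindex_arr_continuous.
split; first by move=> q _; rewrite reindex_src.
split; first by move=> q _; rewrite reindex_tgt.
split; first by move=> q r _ _ _; rewrite reindex_comp.
by [].
Qed.
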